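(* For any $n\in\mathbb{N}$ and $A>0$, there exists $f\in C^1[-1,1]$ with $f\le0$ on $[-1,0]$ and $f\ge0$ on $[0,1]$, such that every algebraic polynomial $P_n$ of degree $\le n$ which satisfies $P_n\ge0$ on $(0,1/n)$ and $P_n^{(i)}(0)=f^{(i)}(0)$ for $i=0,1$ obeys $$\|f-P_n\|>A\,\omega_3(f',1).$$
   Context: $\|\cdot\|$ is the sup norm on $[-1,1]$; $\omega_3(g,t)$ is the third modulus of smoothness of $g$ on $[-1,1]$. *)

From HB Require Import structures.
From mathcomp Require Import all_boot all_order all_algebra.
From mathcomp Require Import all_classical all_reals all_analysis.
Set Implicit Arguments. Unset Strict Implicit. Unset Printing Implicit Defensive.
Import Order.TTheory GRing.Theory Num.Theory.
Import numFieldNormedType.Exports.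
Local Open Scope classical_set_scope.
Local Open Scope ring_scope.

Definition supnorm {R : realType} (g : R -> R) : R :=
  sup [set y : R | exists2 x : R, (-1 <= x <= 1) & y = `|g x|].

Definition omega3 {R : realType} (g : R -> R) (t : R) : R :=
  sup [set y : R | exists h x : R,
        [/\ 0 < h <= t, -1 <= x, x + 3 * h <= 1 &
            y = `|g (x + 3 * h) - 3 * g (x + 2 * h) + 3 * g (x + h) - g x|] ].

(* The function is f = x^3 - d x^2 + h with the hump h(x) = d^3 - d^5 / (d^2 + x^2),
   so that f has the sign of x, 0 <= h <= d^3 and |h'| <= d^2.  As f' is a
   quadratic plus h', omega_3(f', 1) <= 8 sup |h'| <= 8 d^2.  Conversely, let P be
   an admissible polynomial.  P(0) = P'(0) = 0 and P >= 0 right of 0 force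
   P''(0) >= 0, so q = P - (x^3 - d x^2) has x^2-coefficient at least d.
   Lagrange interpolation at n + 4 fixed nodes of [-1, 0] bounds that
   coefficient by K (||f - P|| + d^3), with K depending on n only.  Choosing d
   small with respect to K and A then gives ||f - P|| > 8 A d^2. *)

From HB Require Import structures.
From mathcomp Require Import all_boot all_order all_algebra.
From mathcomp Require Import all_classical all_reals all_analysis.
From mathcomp Require Import ring lra qpoly.
Import Order.TTheory GRing.Theory Num.Theory.
Import numFieldNormedType.Exports.
Local Open Scope classical_set_scope.
Local Open Scope ring_scope.

Lemma norm_coef_le_lagrange {K : numFieldType} {N : nat} {x : nat -> K}
    {q : {poly K}} {B : K} (k : nat) :
  (0 < N)%N -> injective x -> (size q <= N)%N ->
  (forall i : 'I_N, `|q.[x i]| <= B) ->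
  `|q`_k| <= (\sum_(i < N) `|(tnth (lagrange N x) i)`_k|) * B.
Proof.
move=> N_gt0 x_inj size_q qB.
rewrite {1}(lagrange_gen N_gt0 x_inj size_q) coef_sum mulr_suml.
apply: le_trans (ler_norm_sum _ _ _) _; apply: ler_sum => i _.
by rewrite coefCM normrM mulrC ler_wpM2l.
Qed.

Lemma coef2_ge0_right_nonneg {R : realType} (P : {poly R}) (e : R) :
  0 < e -> (forall x, 0 < x < e -> 0 <= P.[x]) ->
  P.[0] = 0 -> (deriv P).[0] = 0 -> 0 <= P`_2.
Proof.
move=> e_gt0 P_ge0; rewrite !horner_coef0 coef_deriv mulr1n => P0 P1.
pose S := drop_poly 2 P.
have PE x : P.[x] = x ^+ 2 * S.[x].
  have take0 : take_poly 2 P = 0.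
    by apply/polyP => -[|[|i]]; rewrite coef_take_poly coef0.
  by rewrite -{1}(poly_take_drop 2 P) take0 add0r hornerM hornerXn mulrC.
have -> : P`_2 = S.[0] by rewrite horner_coef0 coef_drop_poly.
have S_cvg : horner S @ (0 : R)^'+ --> S.[0].
  exact/cvg_at_right_filter/continuous_horner.
apply: (cvgr_to_ge S_cvg); near=> x.
have x_gt0 : 0 < x by near: x; exact: nbhs_right_gt.
have x_lt : x < e by near: x; exact: nbhs_right_lt.
by have := P_ge0 x; rewrite x_gt0 x_lt PE => /(_ isT); rewrite pmulr_rge0 ?exprn_gt0.
Unshelve. all: by end_near.
Qed.

Definition node {R : realFieldType} (N j : nat) : R := - (j%:R / N%:R).

Lemma node_inj {R : realFieldType} N : (0 < N)%N -> injective (@node R N).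
Proof.
move=> N_gt0 i j /oppr_inj /(mulIf _) /eqP.
by rewrite invr_eq0 pnatr_eq0 -lt0n N_gt0 eqr_nat => /(_ isT) /eqP.
Qed.

Lemma node_in {R : realFieldType} N (i : 'I_N) : -1 <= @node R N i <= 1.
Proof.
have N_gt0 : (0 : R) < N%:R by rewrite ltr0n (leq_ltn_trans (leq0n i)).
have i_ge0 : 0 <= (i%:R : R) / N%:R by rewrite divr_ge0 // ltW.
have i_le1 : (i%:R : R) / N%:R <= 1 by rewrite ler_pdivrMr // mul1r ler_nat ltnW.
by rewrite /node; apply/andP; split; lra.
Qed.

Lemma norm_le_supnorm {R : realType} (h : R -> R) x :
  continuous h -> -1 <= x <= 1 -> `|h x| <= supnorm h.
Proof.
move=> h_cont x_in; have m1 : (-1 : R) <= 1 by lra.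
have /(EVT_max m1)[c _ c_max] : {within `[-1, 1], continuous (fun t => `|h t|)}.
  apply: continuous_subspaceT => t.
  exact: continuous_comp (h_cont t) (@norm_continuous _ _ _).
apply: ub_le_sup; last by exists x.
by exists `|h c| => _ [t t_in ->]; apply: c_max; rewrite in_itv.
Qed.

Lemma omega3_le {R : realType} (g : R -> R) (t B : R) :
  (forall x, `|g x| <= B) -> omega3 g t <= 8 * B.
Proof.
move=> gB; rewrite /omega3; set S := [set y | _].
have [->|/set0P S_ne] := eqVneq S set0.
  by rewrite sup0 mulr_ge0 //; exact: le_trans (normr_ge0 _) (gB 0).
apply: ge_sup S_ne _ => _ [h [x [_ _ _ ->]]].
move: (gB x) (gB (x + h)) (gB (x + 2 * h)) (gB (x + 3 * h)).
rewrite !ler_norml => /andP[? ?] /andP[? ?] /andP[? ?] /andP[? ?].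
by apply/andP; split; lra.
Qed.

Lemma omega3_add_quadratic {R : realType} (a b c : R) (g : R -> R) (t : R) :
  omega3 (fun x => a * x ^+ 2 + b * x + c + g x) t = omega3 g t.
Proof.
rewrite /omega3; congr sup; apply: eq_set => y.
do 2 (apply: eq_exists => ?); congr [/\ _, _, _ & y = `|_|]; ring.
Qed.

Section cubic_hump.
Context {R : realType} (d : R).
Hypothesis d_gt0 : 0 < d.
Let d_ge0 : 0 <= d := ltW d_gt0.

Definition hump (x : R) : R := d ^+ 3 - d ^+ 5 / (d ^+ 2 + x ^+ 2).
Definition hump' (x : R) : R := 2 * d ^+ 5 * x / (d ^+ 2 + x ^+ 2) ^+ 2.

Lemma hump_denom_gt0 x : 0 < d ^+ 2 + x ^+ 2.
Proof. by rewrite ltr_pwDl ?sqr_ge0 ?exprn_gt0. Qed.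

Lemma hump_ge0 x : 0 <= hump x.
Proof.
have r_gt0 := hump_denom_gt0 x.
rewrite subr_ge0 ler_pdivrMr // -subr_ge0.
have -> : d ^+ 3 * (d ^+ 2 + x ^+ 2) - d ^+ 5 = d ^+ 3 * x ^+ 2 by ring.
by rewrite mulr_ge0 ?sqr_ge0 ?exprn_ge0.
Qed.

Lemma hump_le x : hump x <= d ^+ 3.
Proof.
by rewrite gerBl divr_ge0 ?exprn_ge0 // ltW // hump_denom_gt0.
Qed.

Lemma norm_hump' x : `|hump' x| <= d ^+ 2.
Proof.
have r_gt0 := exprn_gt0 2 (hump_denom_gt0 x).
rewrite /hump' normf_div (gtr0_norm r_gt0) ler_pdivrMr //.
rewrite -[x ^+ 2](real_normK (num_real x)) normrM [`|2 * _|]normrM normr_nat.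
rewrite normrX (gtr0_norm d_gt0).
set y := `|x|; rewrite -subr_ge0.
have -> : d ^+ 2 * (d ^+ 2 + y ^+ 2) ^+ 2 - 2 * d ^+ 5 * y
    = d ^+ 2 * (d ^+ 2 * ((d - y) ^+ 2 + y ^+ 2) + (y ^+ 2) ^+ 2) by ring.
rewrite mulr_ge0 ?sqr_ge0 // addr_ge0 ?sqr_ge0 //.
by rewrite mulr_ge0 ?sqr_ge0 // addr_ge0 ?sqr_ge0.
Qed.

Lemma is_derive_hump x : is_derive x (1 : R) hump (hump' x).
Proof.
have r_neq0 := lt0r_neq0 (hump_denom_gt0 x).
by apply: is_derive_eq; rewrite /hump' /GRing.scale /=; field.
Qed.

Lemma continuous_hump' : continuous hump'.
Proof.
pose r : {poly R} := ((d ^+ 2)%:P + 'X^2) ^+ 2.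
have r_neq0 y : r.[y] != 0 by rewrite /r !hornerE expf_neq0 ?lt0r_neq0 ?hump_denom_gt0.
have -> : hump' = fun y => (2 * d ^+ 5 *: 'X).[y] / r.[y].
  by apply/funext => y; rewrite /r hornerZ hornerX horner_exp hornerD hornerC hornerXn.
move=> y; apply: continuousM; first exact: continuous_horner.
by apply: continuousV (r_neq0 y) _; exact: continuous_horner.
Qed.

Definition cubic : {poly R} := 'X^3 - d *: 'X^2.

Lemma size_cubic : (size cubic <= 4)%N.
Proof.
rewrite (leq_trans (size_polyD _ _)) // size_polyN size_polyXn geq_max /=.
by rewrite (leq_trans (size_scale_leq _ _)) // size_polyXn.
Qed.

Lemma cubicE x : cubic.[x] = x ^+ 3 - d * x ^+ 2.
Proof. by rewrite hornerD hornerN hornerZ !hornerXn. Qed.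

Lemma coef2_cubic : cubic`_2 = - d.
Proof. by rewrite coefB coefZ !coefXn /= mulr1 sub0r. Qed.

Lemma deriv_cubicE x : (deriv cubic).[x] = 3 * x ^+ 2 - 2 * d * x.
Proof. by rewrite derivB derivZ !derivXn !hornerE /=; ring. Qed.

Definition cubic_hump (x : R) : R := cubic.[x] + hump x.

Lemma cubic_humpE x :
  cubic_hump x = x * (x ^+ 2 * (d ^+ 2 - d * x + x ^+ 2) / (d ^+ 2 + x ^+ 2)).
Proof.
rewrite /cubic_hump /hump cubicE; field.
by rewrite lt0r_neq0 ?hump_denom_gt0.
Qed.

Lemma cubic_hump_cofactor_ge0 x :
  0 <= x ^+ 2 * (d ^+ 2 - d * x + x ^+ 2) / (d ^+ 2 + x ^+ 2).
Proof.
have q_ge0 : 0 <= d ^+ 2 - d * x + x ^+ 2 by nra.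
by rewrite divr_ge0 ?(ltW (hump_denom_gt0 x)) // mulr_ge0 ?sqr_ge0.
Qed.

Lemma cubic_hump_le0 x : x <= 0 -> cubic_hump x <= 0.
Proof. by move=> x_le0; rewrite cubic_humpE mulr_le0_ge0 ?cubic_hump_cofactor_ge0. Qed.

Lemma cubic_hump_ge0 x : 0 <= x -> 0 <= cubic_hump x.
Proof. by move=> x_ge0; rewrite cubic_humpE mulr_ge0 ?cubic_hump_cofactor_ge0. Qed.

Lemma cubic_hump0 : cubic_hump 0 = 0.
Proof. by rewrite cubic_humpE mul0r. Qed.

Lemma is_derive_cubic_hump x :
  is_derive x (1 : R) cubic_hump ((deriv cubic).[x] + hump' x).
Proof. exact: is_deriveD (is_derive_poly cubic x) (is_derive_hump x). Qed.

Lemma derivable_cubic_hump x : derivable cubic_hump x 1.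
Proof. by have [] := is_derive_cubic_hump x. Qed.

Lemma continuous_cubic_hump : continuous cubic_hump.
Proof.
by move=> x; apply/differentiable_continuous/derivable1_diffP/derivable_cubic_hump.
Qed.

Lemma derive1_cubic_hump :
  derive1 cubic_hump = fun x => (deriv cubic).[x] + hump' x.
Proof.
by apply/funext => x; rewrite derive1E; have [_ ->] := is_derive_cubic_hump x.
Qed.

Lemma continuous_derive1_cubic_hump : continuous (derive1 cubic_hump).
Proof.
rewrite derive1_cubic_hump => x.
by apply: continuousD; [exact: continuous_horner | exact: continuous_hump'].
Qed.

Lemma derive1_cubic_hump0 : derive1 cubic_hump 0 = 0.
Proof.
by rewrite derive1_cubic_hump deriv_cubicE /hump' !(expr0n, mulr0, mul0r) subrr add0r.
Qed.

Lemma omega3_derive1_cubic_hump t :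
  omega3 (derive1 cubic_hump) t <= 8 * d ^+ 2.
Proof.
have -> : derive1 cubic_hump = fun x => 3 * x ^+ 2 + (- 2 * d) * x + 0 + hump' x.
  by rewrite derive1_cubic_hump; apply/funext => x; rewrite deriv_cubicE; ring.
by rewrite omega3_add_quadratic; apply: omega3_le; exact: norm_hump'.
Qed.

Lemma cubic_hump_dist_lb (N : nat) (x : nat -> R) (P : {poly R}) :
  (3 < N)%N -> injective x -> (forall i : 'I_N, -1 <= x i <= 1) ->
  (size P <= N)%N -> 0 <= P`_2 ->
  d <= (\sum_(i < N) `|(tnth (lagrange N x) i)`_2|) *
       (supnorm (fun y => cubic_hump y - P.[y]) + d ^+ 3).
Proof.
move=> N_gt3 x_inj x_in size_P P2_ge0.
have dist_cont : continuous (fun y => cubic_hump y - P.[y]).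
  move=> y; apply: continuousB; first exact: continuous_cubic_hump.
  exact: continuous_horner.
pose q := P - cubic.
have size_q : (size q <= N)%N.
  rewrite (leq_trans (size_polyD _ _)) // size_polyN geq_max size_P.
  exact: leq_trans size_cubic _.
have q_nodes (i : 'I_N) :
    `|q.[x i]| <= supnorm (fun y => cubic_hump y - P.[y]) + d ^+ 3.
  have -> : q.[x i] = hump (x i) - (cubic_hump (x i) - P.[x i]).
    by rewrite /q /cubic_hump hornerD hornerN; ring.
  rewrite (le_trans (ler_normB _ _)) // addrC; apply: lerD.
    exact: norm_le_supnorm _ _ dist_cont (x_in i).
  by rewrite ger0_norm ?hump_ge0 ?hump_le.
have N_gt0 : (0 < N)%N by apply: leq_trans N_gt3.
apply: le_trans _ (norm_coef_le_lagrange 2 N_gt0 x_inj size_q q_nodes).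
by rewrite coefB coef2_cubic opprK ger0_norm ?addr_ge0 // lerDr.
Qed.

End cubic_hump.

Lemma exists_scale_lt {R : realFieldType} {K A : R} : 0 <= K -> 0 <= A ->
  exists2 d : R, 0 < d & K * (8 * A * d ^+ 2 + d ^+ 3) < d.
Proof.
move=> K_ge0 A_ge0; have C_gt0 : 0 < 1 + K * (8 * A + 1) by nra.
exists (1 + K * (8 * A + 1))^-1; first by rewrite invr_gt0.
set d := (1 + _)^-1.
have d_gt0 : 0 < d by rewrite invr_gt0.
have d_le1 : d <= 1 by rewrite invf_le1 //; nra.
have Cd : K * (8 * A + 1) * d = 1 - d by rewrite /d; field; rewrite lt0r_neq0.
have d3_le : K * d ^+ 3 <= K * d ^+ 2.
  by rewrite ler_wpM2l // exprSr ger_pMr ?exprn_gt0.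
have : K * (8 * A * d ^+ 2 + d ^+ 3) <= K * (8 * A + 1) * d * d by lra.
rewrite Cd; nra.
Qed.

Theorem lemma3p10 (R : realType) (n : nat) (A : R) :
  (0 < n)%N -> 0 < A ->
  exists f : R -> R,
    [/\ (forall x : R, derivable f x 1),
        continuous (derive1 f),
        (forall x : R, -1 <= x <= 0 -> f x <= 0),
        (forall x : R, 0 <= x <= 1 -> 0 <= f x) &
        forall P : {poly R}, (size P <= n.+1)%N ->
          (forall x : R, 0 < x < n%:R^-1 -> 0 <= P.[x]) ->
          P.[0] = f 0 -> (deriv P).[0] = derive1 f 0 ->
          A * omega3 (derive1 f) 1 < supnorm (fun x => f x - P.[x])].
Proof.
move=> n_gt0 A_gt0; pose N := n.+4.
pose K := \sum_(i < N) `|(tnth (lagrange N (@node R N)) i)`_2|.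
have K_ge0 : 0 <= K by apply: sumr_ge0 => i _; exact: normr_ge0.
have [d d_gt0 dK] := exists_scale_lt K_ge0 (ltW A_gt0).
exists (cubic_hump d); split.
- exact: derivable_cubic_hump.
- exact: continuous_derive1_cubic_hump.
- by move=> y /andP[_]; exact: cubic_hump_le0.
- by move=> y /andP[+ _]; exact: cubic_hump_ge0.
move=> P size_P P_ge0 P0 P1.
have P2_ge0 : 0 <= P`_2.
  apply: (coef2_ge0_right_nonneg P n%:R^-1) => //.
  - by rewrite invr_gt0 ltr0n.
  - by rewrite P0 cubic_hump0.
  - by rewrite P1 derive1_cubic_hump0.
have := cubic_hump_dist_lb _ d_gt0 N (node N) P isT (node_inj N isT) (node_in N)
  (leq_trans size_P (leq_addl 3 _)) P2_ge0.
have := omega3_derive1_cubic_hump _ d_gt0 1.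
rewrite ltNge; set M := supnorm _; set w := omega3 _ _ => w_le dist_lb.
apply/negP => M_le.
have M_le' : M <= 8 * A * d ^+ 2.
  rewrite (le_trans M_le) // (_ : 8 * A * _ = A * (8 * d ^+ 2)); last by ring.
  by rewrite ler_wpM2l // ltW.
have := ler_wpM2l K_ge0 (lerD M_le' (lexx (d ^+ 3))).
by move=> /(le_trans dist_lb) /le_lt_trans /(_ dK); rewrite ltxx.
Qed.
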